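(* Let $m\ge 2$, let $C=uRM(m)$ (defined in the context), and fix any choice of base qubits $b_0,\dots,b_m$ for $C$. Then the parity labels $L(q)$ of the $2^m$ qubits $q$ are exactly all the odd-cardinality subsets of $\{0,1,\dots,m\}$, each such subset being the label of exactly one qubit.
   Context: Let $a=\lceil m/2\rceil$, $b=\lfloor m/2\rfloor$. Place $2^m$ bits (qubits) on a grid with $2^b$ rows and $2^a$ columns, positions $(i,j)$, row $1$ on top, column $1$ leftmost. Bulk checks: for $1\le i<2^b$, $1\le j<2^a$, the set $\{(i,j),(i+1,j),(i,j+1),(i+1,j+1)\}$. Boundary checks: for a line of $L=2^n$ positions $1,\dots,L$, each $s\in\{1,\dots,n-1\}$, $w=2^s$, and integer $t$ with $-L/(2w)+1\le t\le L/(2w)-1$, $S(w,t)=\{L/2-w/2+wt,\ L/2-w/2+wt+1,\ L/2+w/2+wt,\ L/2+w/2+wt+1\}$; these with $n=a$ on the top row ($j\mapsto(1,j)$) and with $n=b$ on the leftmost column ($i\mapsto(i,1)$). $C=uRM(m)$ is the set of $x\in\mathbb{F}_2^{2^m}$ with even sum over every check; it has dimension $m+1$. Base qubits and parity labels: base qubits are $m+1$ positions $b_0,\dots,b_m$ such that the map $C\to\mathbb{F}_2^{m+1}$, $x\mapsto(x_{b_0},\dots,x_{b_m})$ is a bijection. For each qubit $q$, its parity label is the unique subset $L(q)\subseteq\{0,\dots,m\}$ such that $x_q=\sum_{i\in L(q)}x_{b_i}$ for all $x\in C$. *)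

From mathcomp Require Import all_boot all_order all_algebra.
Set Implicit Arguments. Unset Strict Implicit. Unset Printing Implicit Defensive.
Import Order.TTheory GRing.Theory Num.Theory.

Definition acols (m : nat) : nat := uphalf m.
Definition brows (m : nat) : nat := m./2.

(* Qubit positions: (row, column), 0-indexed; row i (0-based) is row i+1 of
   the paper, column j (0-based) is column j+1. Row 1 is the top row. *)
Definition pos (m : nat) : finType :=
  ('I_(2 ^ brows m) * 'I_(2 ^ acols m))%type.

(* The four 1-indexed positions of the boundary check S(w,t) on a line of
   L = 2^n positions, with w = 2^s. *)
Definition Sbd (n s : nat) (t : int) : seq int :=
  let L := (2 ^ n)%N in let w := (2 ^ s)%N in
  [:: ((L %/ 2)%N%:Z - (w %/ 2)%N%:Z + w%:Z * t)%R;
      ((L %/ 2)%N%:Z - (w %/ 2)%N%:Z + w%:Z * t + 1)%R;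
      ((L %/ 2)%N%:Z + (w %/ 2)%N%:Z + w%:Z * t)%R;
      ((L %/ 2)%N%:Z + (w %/ 2)%N%:Z + w%:Z * t + 1)%R].

Definition bd_index (n s : nat) (t : int) : Prop :=
  (1 <= s <= n - 1)%N /\
  (- ((2 ^ n) %/ (2 * 2 ^ s))%N%:Z + 1 <= t <= ((2 ^ n) %/ (2 * 2 ^ s))%N%:Z - 1)%R.

Definition is_check (m : nat) (S : {set pos m}) : Prop :=
  (exists i j : nat, [/\ (1 <= i < 2 ^ brows m)%N, (1 <= j < 2 ^ acols m)%N &
      S = [set p : pos m | ((val p.1).+1 \in [:: i; i.+1])
                           && ((val p.2).+1 \in [:: j; j.+1])]])
  \/ (exists (s : nat) (t : int), bd_index (acols m) s t /\
      S = [set p : pos m | (val p.1 == 0%N)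
                           && (Posz (val p.2).+1 \in Sbd (acols m) s t)])
  \/ (exists (s : nat) (t : int), bd_index (brows m) s t /\
      S = [set p : pos m | (val p.2 == 0%N)
                           && (Posz (val p.1).+1 \in Sbd (brows m) s t)]).

Definition word (m : nat) := {ffun pos m -> bool}.

Definition in_uRM (m : nat) (x : word m) : Prop :=
  forall S : {set pos m}, @is_check m S -> ~~ odd #|[set p in S | x p]|.

Definition base_qubits (m : nat) (bs : 'I_m.+1 -> pos m) : Prop :=
  forall y : {ffun 'I_m.+1 -> bool},
    exists! x : word m, @in_uRM m x /\ (forall k, x (bs k) = y k).

Definition is_parity_label (m : nat) (bs : 'I_m.+1 -> pos m) (q : pos m)
    (L : {set 'I_m.+1}) : Prop :=
  forall x : word m, @in_uRM m x -> x q = \big[addb/false]_(i in L) x (bs i).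

(* Words of the form x(i, j) = r(i) + c(j) pass every bulk check, and they pass
   the boundary checks as soon as the jumps r(n - 1) + r(n) and c(n - 1) + c(n)
   at n = 2^e K, K odd, depend only on e: a boundary check covers two such
   jumps with the same e.  Constants and the binary digits n |-> bit_s(n) have
   this property.  Since C is a group and the base coordinates identify it
   with F_2^(m+1), the unique label of q is the set of k such that the
   codeword with base values e_k is 1 at q.  The all-ones word forces labels
   to be odd, the digit words separate any two qubits, and there are as many
   qubits (2^m) as odd subsets of {0, ..., m}. *)

From mathcomp Require Import all_boot all_order all_algebra.
From mathcomp Require Import zify.
Import GRing.Theory.

Lemma mulrn_bool (x : bool) n : (x *+ n)%R = x && odd n.
Proof. by case: x; [elim: n => [|n IHn] //; rewrite mulrS IHn | rewrite mul0rn]. Qed.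

Lemma addrr_bool (x : bool) : (x + x = 0)%R.
Proof. exact: addbb. Qed.

Lemma odd_card_sum (T : finType) (S : {set T}) (x : T -> bool) :
  odd #|[set p in S | x p]| = (\sum_(p in S) x p)%R.
Proof.
rewrite -sum1_card (big_morph odd oddD (erefl : odd 0 = false)) big_mkcond /=.
rewrite [RHS]big_mkcond; apply: eq_bigr => p _.
by rewrite inE; case: (p \in S); case: (x p).
Qed.

Lemma sum_setX_add {V : nmodType} {I J : finType} (A : {set I}) (B : {set J})
    (r : I -> V) (c : J -> V) :
  (\sum_(p in setX A B) (r p.1 + c p.2) =
   (\sum_(i in A) r i) *+ #|B| + (\sum_(j in B) c j) *+ #|A|)%R.
Proof.
have sumX (F : I -> J -> V) :
    (\sum_(p in setX A B) F p.1 p.2 = \sum_(i in A) \sum_(j in B) F i j)%R.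
  by rewrite pair_big_dep; apply: eq_bigl => -[i j]; rewrite inE.
rewrite big_split /= (sumX (fun i _ => r i)) (sumX (fun _ j => c j)) exchange_big /=.
by rewrite !sumr_const.
Qed.

Definition ord_set N (l : seq nat) : {set 'I_N} := [set j : 'I_N | val j \in l].

Lemma big_ord_set (R : Type) (idx : R) (op : Monoid.com_law idx) N l (F : nat -> R) :
  uniq l -> all (fun v => v < N) l ->
  \big[op/idx]_(j in ord_set N l) F j = \big[op/idx]_(v <- l) F v.
Proof.
move=> l_uniq /allP l_lt.
rewrite (eq_bigl (fun j : 'I_N => val j \in l)) => [|j]; last by rewrite inE.
rewrite -(big_mkord (fun v => v \in l) F) -big_filter; apply: perm_big.
apply: uniq_perm (filter_uniq _ (iota_uniq _ _)) l_uniq _ => v.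
by rewrite mem_filter mem_iota subn0; case: (boolP (v \in l)) => //= /l_lt.
Qed.

Lemma card_ord_set N l : uniq l -> all (fun v => v < N) l -> #|ord_set N l| = size l.
Proof.
by move=> l_uniq l_lt; rewrite -sum1_card (@big_ord_set _ _ _ N l (fun=> 1)) // sum1_size.
Qed.

Definition rowcol_word m (r c : nat -> bool) : word m :=
  [ffun p => r (val p.1) + c (val p.2)]%R.

Lemma sum_rowcol_word m r c (l1 l2 : seq nat) :
  uniq l1 -> all (fun v => v < 2 ^ brows m) l1 ->
  uniq l2 -> all (fun v => v < 2 ^ acols m) l2 ->
  (\sum_(p : pos m | (val p.1 \in l1) && (val p.2 \in l2)) rowcol_word m r c p =
   (\sum_(v <- l1) r v) *+ size l2 + (\sum_(v <- l2) c v) *+ size l1)%R.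
Proof.
move=> u1 lt1 u2 lt2.
rewrite (eq_bigl (mem (setX (ord_set _ l1) (ord_set _ l2)))) => [|p]; last by rewrite !inE.
under eq_bigr do rewrite ffunE.
by rewrite (sum_setX_add _ _ (fun i => r (val i)) (fun j => c (val j)))
   !big_ord_set ?card_ord_set.
Qed.

Lemma in_uRM_sumE m (x : word m) :
  in_uRM x <-> forall S, is_check S -> (\sum_(p in S) x p = 0)%R.
Proof.
by split=> x_uRM S /x_uRM; rewrite odd_card_sum; [move/negbTE | move->].
Qed.

Definition jump (c : nat -> bool) n := (c n.-1 + c n)%R.

Definition dyadic_compatible (c : nat -> bool) :=
  forall e K K', odd K -> odd K' -> jump c (2 ^ e * K) = jump c (2 ^ e * K').

Definition boundary_points e u : seq nat :=
  [:: (2 ^ e * (2 * u + 1)).-1; 2 ^ e * (2 * u + 1);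
      (2 ^ e * (2 * u + 3)).-1; 2 ^ e * (2 * u + 3)].

Lemma boundary_points_uniq e u : uniq (boundary_points e u).
Proof. have : 0 < 2 ^ e by rewrite expn_gt0. by rewrite /= !inE; nia. Qed.

Lemma sum_boundary_points c e u :
  dyadic_compatible c -> (\sum_(v <- boundary_points e u) c v = 0)%R.
Proof.
move=> c_comp.
have -> : (\sum_(v <- boundary_points e u) c v =
           jump c (2 ^ e * (2 * u + 1)) + jump c (2 ^ e * (2 * u + 3)))%R.
  by rewrite !big_cons big_nil addr0 !addrA.
by rewrite (c_comp e _ (2 * u + 3)) ?addrr_bool // addnC oddD oddM.
Qed.

(* With w = 2 ^ s and L = 2 ^ n, take e = s - 1 and u = L / (2 w) + t - 1. *)
Lemma Sbd_boundary_points n s t : bd_index n s t -> exists e u,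
  all (fun v => v < 2 ^ n) (boundary_points e u) /\
  Sbd n s t = [seq Posz v.+1 | v <- boundary_points e u].
Proof.
move=> [/andP [s_gt0 s_le] /andP[t_ge t_le]]; move: t_ge t_le; rewrite /Sbd.
have -> : 2 ^ s = 2 * 2 ^ s.-1 by rewrite -expnS prednK.
have -> : 2 ^ n = 2 ^ s.-1 * 4 * 2 ^ (n - s.+1).
  by rewrite -[4]/(2 ^ 2) -!expnD; congr (2 ^ _); lia.
have h_gt0 : 0 < 2 ^ s.-1 by rewrite expn_gt0.
set h := 2 ^ s.-1 in h_gt0 *; set M := 2 ^ (n - s.+1).
have -> : h * 4 * M %/ (2 * (2 * h)) = M.
  by rewrite (_ : h * 4 * M = (2 * (2 * h)) * M) ?mulKn ?muln_gt0 //; nia.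
have -> : h * 4 * M %/ 2 = h * 2 * M.
  by rewrite (_ : h * 4 * M = 2 * (h * 2 * M)) ?mulKn //; nia.
rewrite mulKn // => t_ge t_le.
have [u t_eq] : exists u : nat, t = (u%:Z - M%:Z + 1)%R.
  by exists `|(t + M%:Z - 1)%R|%N; lia.
subst t.
have u_lt : 2 * u + 3 < 4 * M by lia.
exists s.-1, u; rewrite /boundary_points -/h /=; split; first by nia.
by congr [:: _; _; _; _]; lia.
Qed.

Definition bit s n := odd (n %/ 2 ^ s).

Lemma eq_bits k a b :
  a < 2 ^ k -> b < 2 ^ k -> (forall s, bit s a = bit s b) -> a = b.
Proof.
elim: k a b => [|k IHk] a b; first by rewrite !ltnS !leqn0 => /eqP-> /eqP->.
rewrite expnS => a_lt b_lt eq_ab.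
have half_eq : a./2 = b./2.
  apply: IHk => [||s]; rewrite -!divn2.
  - by rewrite ltn_divLR // mulnC.
  - by rewrite ltn_divLR // mulnC.
  - by have := eq_ab s.+1; rewrite /bit expnS !divnMA.
have := eq_ab 0; rewrite /bit expn0 !divn1 => odd_eq.
by rewrite -(odd_double_half a) -(odd_double_half b) odd_eq half_eq.
Qed.

Lemma jump_bit s n : 0 < n -> jump (bit s) n = (2 ^ s %| n).
Proof.
have d_gt0 : 0 < 2 ^ s by rewrite expn_gt0.
rewrite /jump /bit (divn_eq n (2 ^ s)); have := ltn_pmod n d_gt0.
move: (n %/ 2 ^ s) (n %% 2 ^ s) => q [_|r r_lt].
- case: q => // q _.
  have -> : (q.+1 * 2 ^ s + 0).-1 = q * 2 ^ s + (2 ^ s).-1 by nia.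
  rewrite divnMDl // divn_small ?prednK // !addn0 mulnK // dvdn_mull //=.
  by case: (odd q).
- have -> : (q * 2 ^ s + r.+1).-1 = q * 2 ^ s + r by rewrite addnS.
  rewrite !divnMDl // (divn_small r_lt) (divn_small (ltnW r_lt)) addn0 addrr_bool => _.
  by rewrite dvdn_addr ?dvdn_mull // gtnNdvd.
Qed.

Lemma dvdn_exp2_odd s e K : odd K -> (2 ^ s %| 2 ^ e * K) = (s <= e).
Proof.
move=> K_odd; have K_gt0 : 0 < K by case: K K_odd.
rewrite pfactor_dvdn // ?muln_gt0 ?expn_gt0 ?K_gt0 //.
by rewrite lognM ?expn_gt0 // pfactorK // logn_coprime ?addn0 // coprime2n.
Qed.

Lemma bit_dyadic_compatible s : dyadic_compatible (bit s).
Proof.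
move=> e K K' K_odd K'_odd.
have pos L : odd L -> 0 < 2 ^ e * L by case: L => // L _; rewrite muln_gt0 expn_gt0.
by rewrite !jump_bit ?pos // !dvdn_exp2_odd.
Qed.

Lemma const_dyadic_compatible b : dyadic_compatible (fun=> b).
Proof. by []. Qed.

Lemma rowcol_word_in_uRM m r c :
  dyadic_compatible r -> dyadic_compatible c -> in_uRM (rowcol_word m r c).
Proof.
move=> r_comp c_comp; apply/in_uRM_sumE => S.
have zero_lt n : all (fun v => v < 2 ^ n) [:: 0] by rewrite /= expn_gt0.
have succ_Posz_inj : injective (fun v => Posz v.+1) by move=> v w [].
case=> [[i [j [/andP[i_gt0 i_lt] /andP[j_gt0 j_lt] ->]]]
       | [[s [t [st ->]]] | [s [t [st ->]]]]].
- have succ_mem k v : 0 < k -> (v.+1 \in [:: k; k.+1]) = (v \in [:: k.-1; k]).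
    by move=> k_gt0; rewrite !inE; case: k k_gt0 => // k _; rewrite !eqSS.
  under eq_bigl do rewrite inE !succ_mem //.
  by rewrite sum_rowcol_word /= ?inE ?mulrn_bool ?andbF ?addr0 //; lia.
- case/Sbd_boundary_points: st => e [u [pts_lt ->]].
  under eq_bigl do rewrite inE (mem_map succ_Posz_inj) -mem_seq1.
  rewrite sum_rowcol_word ?boundary_points_uniq ?sum_boundary_points //.
  by rewrite !mulrn_bool andbF andbT.
- case/Sbd_boundary_points: st => e [u [pts_lt ->]].
  under eq_bigl do rewrite inE (mem_map succ_Posz_inj) -mem_seq1 andbC.
  rewrite sum_rowcol_word ?boundary_points_uniq ?sum_boundary_points //.
  by rewrite !mulrn_bool andbF andbT.
Qed.

Lemma in_uRM0 m : in_uRM (0 : word m)%R.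
Proof. by apply/in_uRM_sumE => S _; rewrite big1 // => p _; rewrite ffunE. Qed.

Lemma in_uRMD m (x y : word m) : in_uRM x -> in_uRM y -> in_uRM (x + y)%R.
Proof.
move=> /in_uRM_sumE x_uRM /in_uRM_sumE y_uRM; apply/in_uRM_sumE => S S_check.
under eq_bigr do rewrite ffunE.
by rewrite big_split /= x_uRM ?y_uRM.
Qed.

Lemma in_uRM_sum m (I : finType) (P : pred I) (F : I -> word m) :
  (forall i, P i -> in_uRM (F i)) -> in_uRM (\sum_(i | P i) F i)%R.
Proof. by apply: big_ind; [exact: in_uRM0 | exact: in_uRMD]. Qed.

Lemma big_addbE (I : Type) (r : seq I) (P : pred I) (F : I -> bool) :
  \big[addb/false]_(i <- r | P i) F i = (\sum_(i <- r | P i) F i)%R.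
Proof. by []. Qed.

Lemma sum_bool_eq (I : finType) (P : pred I) j : (\sum_(i | P i) (i == j))%R = P j.
Proof.
rewrite big_mkcond (bigD1 j) //= eqxx big1 ?addr0; first by case: (P j).
by move=> i /negbTE ->; case: (P i).
Qed.

Lemma card_pos m : #|pos m| = 2 ^ m.
Proof.
rewrite card_prod !card_ord -expnD /brows /acols uphalf_half.
by rewrite addnCA addnn odd_double_half.
Qed.

Definition toggle {T : finType} (a : T) (A : {set T}) : {set T} :=
  if a \in A then A :\ a else a |: A.

Lemma toggleK {T : finType} (a : T) : involutive (toggle a).
Proof.
move=> A; rewrite {2}/toggle; case: ifP => aA; rewrite /toggle !inE eqxx /=.
  by rewrite setD1K.
by rewrite setU1K ?aA.
Qed.

Lemma odd_card_toggle (T : finType) (a : T) A : odd #|toggle a A| = ~~ odd #|A|.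
Proof.
rewrite /toggle; case: ifP => aA; last by rewrite cardsU1 aA.
by rewrite [in RHS](cardsD1 a) aA negbK.
Qed.

Lemma card_odd_sets (T : finType) (a : T) :
  (#|[set A : {set T} | odd #|A|]|).*2 = 2 ^ #|T|.
Proof.
set O := [set A : {set T} | odd #|A|].
have toggleO : toggle a @: O = ~: O.
  rewrite (can2_imset_pre _ (toggleK a) (toggleK a)).
  by apply/setP => A; rewrite !inE odd_card_toggle.
have := cardsC O; rewrite -toggleO card_imset; last exact: can_inj (toggleK a).
by rewrite -addnn => ->; rewrite -cardsT -powersetT card_powerset cardsT.
Qed.

Section ParityLabels.

Variables (m : nat) (bs : 'I_m.+1 -> pos m).
Hypothesis bs_base : base_qubits bs.
Variable basis_word : 'I_m.+1 -> word m.
Hypothesis basis_word_uRM : forall k, in_uRM (basis_word k).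
Hypothesis basis_word_base : forall k j, basis_word k (bs j) = (j == k).

Lemma uRM_eq_on_base (x z : word m) :
  in_uRM x -> in_uRM z -> (forall k, x (bs k) = z (bs k)) -> x = z.
Proof.
move=> x_uRM z_uRM xz; have [w [_ w_unique]] := bs_base [ffun k => x (bs k)].
rewrite -(w_unique x) ?(w_unique z) //; split=> // k; by rewrite ffunE ?xz.
Qed.

Lemma uRM_basis_decomp x : in_uRM x -> x = (\sum_(k | x (bs k)) basis_word k)%R.
Proof.
move=> x_uRM; apply: uRM_eq_on_base => //; first exact: in_uRM_sum.
move=> j; rewrite sum_ffunE; under eq_bigr do rewrite basis_word_base eq_sym.
by rewrite sum_bool_eq.
Qed.

Definition label q : {set 'I_m.+1} := [set k | basis_word k q].

Lemma label_parity q : is_parity_label bs q (label q).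
Proof.
move=> x x_uRM; rewrite {1}(uRM_basis_decomp _ x_uRM) sum_ffunE big_addbE.
rewrite big_mkcond [RHS]big_mkcond; apply: eq_bigr => k _; rewrite inE.
by case: (x _); case: (basis_word k q).
Qed.

Lemma parity_label_unique q L : is_parity_label bs q L -> L = label q.
Proof.
move=> L_label; apply/setP => k; rewrite inE (L_label _ (basis_word_uRM k)).
by under eq_bigr do rewrite basis_word_base; rewrite big_addbE sum_bool_eq.
Qed.

Lemma parity_label_odd q L : is_parity_label bs q L -> odd #|L|.
Proof.
have ones_uRM := rowcol_word_in_uRM m _ _ (const_dyadic_compatible true)
                                          (const_dyadic_compatible false).
move/(_ _ ones_uRM); rewrite ffunE /=; under eq_bigr do rewrite ffunE /=.
by rewrite big_addbE sumr_const mulrn_bool.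
Qed.

Lemma label_inj : injective label.
Proof.
move=> [i j] [i' j'] eq_label.
have eq_on x : in_uRM x -> x (i, j) = x (i', j').
  move=> x_uRM.
  by rewrite (label_parity (i, j) _ x_uRM) (label_parity (i', j') _ x_uRM) eq_label.
congr pair.
- apply/val_inj/(eq_bits _ _ _ (ltn_ord i) (ltn_ord i')) => s.
  have := eq_on _ (rowcol_word_in_uRM m _ _ (bit_dyadic_compatible s)
                                           (const_dyadic_compatible false)).
  by rewrite !ffunE !addr0.
- apply/val_inj/(eq_bits _ _ _ (ltn_ord j) (ltn_ord j')) => s.
  have := eq_on _ (rowcol_word_in_uRM m _ _ (const_dyadic_compatible false)
                                           (bit_dyadic_compatible s)).
  by rewrite !ffunE !add0r.
Qed.

Lemma label_image :
  [set label q | q : pos m] = [set L : {set 'I_m.+1} | odd #|L|].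
Proof.
apply/eqP; rewrite eqEcard card_imset; last exact: label_inj.
apply/andP; split.
  apply/subsetP => _ /imsetP[q _ ->].
  by rewrite inE (parity_label_odd _ _ (label_parity q)).
by rewrite card_pos -leq_double (card_odd_sets _ ord0) card_ord expnS mul2n.
Qed.

End ParityLabels.

Theorem lemma2 (m : nat) (bs : 'I_m.+1 -> pos m) :
  (2 <= m)%N -> base_qubits bs ->
  [/\ (forall q : pos m, exists! L : {set 'I_m.+1}, is_parity_label bs q L),
      (forall (q : pos m) (L : {set 'I_m.+1}), is_parity_label bs q L -> odd #|L|)
    & (forall L : {set 'I_m.+1}, odd #|L| ->
         exists! q : pos m, is_parity_label bs q L)].
Proof.
move=> _ bs_base.
have /fin_all_exists[w w_spec] :
    forall k, exists x : word m, in_uRM x /\ forall j, x (bs j) = (j == k).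
  move=> k; have [x [[x_uRM x_base] _]] := bs_base [ffun j => j == k].
  by exists x; split=> // j; rewrite x_base ffunE.
have w_uRM k := proj1 (w_spec k); have w_base k := proj2 (w_spec k).
have lab_parity := label_parity m bs bs_base w w_uRM w_base.
have lab_unique := parity_label_unique m bs w w_uRM w_base.
split=> [q | | L L_odd].
- exists (label m w q); split=> [|L /lab_unique -> //]; exact: lab_parity.
- exact: parity_label_odd.
have : L \in [set label m w q | q : pos m].
  by rewrite (label_image m bs bs_base w w_uRM w_base) inE.
case/imsetP=> q _ ->; exists q; split=> [|q' /lab_unique]; first exact: lab_parity.
exact: (label_inj m bs bs_base w w_uRM w_base).
Qed.
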